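(* Under the standing assumptions, suppose that $$\operatorname{epi}(f-g+\delta_A)^c\cap B=\Lambda\cap B.$$ Then the following are equivalent: (i) strong duality holds for $(P)-(D^F)$; (ii) strong duality holds for $(P)-(\bar D^F)$ and $\Omega\cap B=K\cap B$. (The implication (ii)$\Rightarrow$(i) holds even without the displayed hypothesis.)
   Context: Let $X$ be a nontrivial separated locally convex space with topological dual $X^*$, endowed with the topology $\sigma(X,X^* )$; $\langle x,x^*\rangle$ is the value of $x^*\in X^*$ at $x\in X$. Put $W:=X^*\times X^*\times\mathbb{R}$, $\mathbb{R}_{++}:=]0,+\infty[$ and $Z:=X^*\times X^*\times\mathbb{R}_{++}$. For $y^*\in X^*$, $\alpha\in\mathbb{R}$, let $H^-_{y^*,\alpha}:=\{x\in X:\langle x,y^*\rangle<\alpha\}$. The coupling function $c:X\times W\to\overline{\mathbb{R}}$ is $c(x,(x^*,y^*,\alpha)):=\langle x,x^*\rangle$ if $\langle x,y^*\rangle<\alpha$ and $:=+\infty$ otherwise. For $h:X\to\overline{\mathbb{R}}$ its $c$-conjugate is $h^c:W\to\overline{\mathbb{R}}$, $h^c(w):=\sup_{x\in X}\{c(x,w)-h(x)\}$, with the convention $(+\infty)+(-\infty)=(-\infty)+(+\infty)=(+\infty)-(+\infty)=(-\infty)-(-\infty)=-\infty$ (so for proper $h$, $h^c(x^*,y^*,\alpha)=h^*(x^* )$ if $\operatorname{dom}h\subseteq H^-_{y^*,\alpha}$ and $+\infty$ otherwise). Epigraphs of functions on $W$ are subsets of $W\times\mathbb{R}$. $\delta_A$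 is the indicator function of $A$. For $E\subseteq W\times\mathbb{R}$ and $e\in W\times\mathbb{R}$, $E-e:=\{z-e:z\in E\}$. Standing assumptions: $f,g:X\to\overline{\mathbb{R}}$ proper convex with $\operatorname{dom}f\subseteq\operatorname{dom}g$, $A\subseteq X$ nonempty, convention $(+\infty)-(+\infty)=+\infty$ in $f-g$; $v(P)=\inf_{x\in X}\{f(x)-g(x)+\delta_A(x)\}$. With $\varphi(u^*,v^*,\gamma;x^*,y^*,\alpha):=g^c(u^*,v^*,\gamma)-f^c(u^*-x^*,-y^*,\alpha)-\delta_A^c(x^*,y^*,\alpha)$: $v(D^F):=\sup_{(x^*,y^*,\alpha)\in Z}\inf_{(u^*,v^*,\gamma)\in\operatorname{dom}g^c}\varphi$ and $v(\bar D^F):=\inf_{(u^*,v^*,\gamma)\in\operatorname{dom}g^c}\sup_{(x^*,y^*,\alpha)\in Z}\varphi$. Strong duality for $(P)-(D^F)$ means $v(P)=v(D^F)$ and there is $(\bar x^*,\bar y^*,\bar\alpha)\in\operatorname{dom}\delta_A^c$ with $\varphi(u^*,v^*,\gamma;\bar x^*,\bar y^*,\bar\alpha)\ge v(D^F)$ for all $(u^*,v^*,\gamma)\in\operatorname{dom}g^c$. Strong duality for $(P)-(\bar D^F)$ means $v(P)=v(\bar D^F)$ and for every $(u^*,v^*,\gamma)\in\operatorname{dom}g^c$ there is $(x^*,y^*,\alpha)\in\operatorname{dom}\delta_A^c$ with $\varphi(u^*,v^*,\gamma;x^*,y^*,\alpha)\ge v(\bar D^F)$. Sets: $B:=\{0\}\times\{0\}\times\mathbb{R}_{++}\times\mathbb{R}\subseteq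 W\times\mathbb{R}$; $\Lambda:=\bigcap_{(u^*,v^*,\gamma)\in\operatorname{dom}g^c}\Big[\operatorname{epi}(f+\delta_A)^c-\big(u^*,0,0,g^c(u^*,v^*,\gamma)\big)\Big]$; $\Omega:=\bigcup_{(x^*,y^*,\alpha)\in\operatorname{dom}\delta_A^c}\ \bigcap_{(u^*,v^*,\gamma)\in\operatorname{dom}g^c}\Big[\operatorname{epi}\big(f-c(\cdot,(-x^*,-y^*,\alpha))\big)^c-\big(u^*,0,0,g^c(u^*,v^*,\gamma)-\delta_A^c(x^*,y^*,\alpha)\big)\Big]$, $K:=\bigcap_{(u^*,v^*,\gamma)\in\operatorname{dom}g^c}\ \bigcup_{(x^*,y^*,\alpha)\in\operatorname{dom}\delta_A^c}\Big[\operatorname{epi}\big(f-c(\cdot,(-x^*,-y^*,\alpha))\big)^c-\big(u^*,0,0,g^c(u^*,v^*,\gamma)-\delta_A^c(x^*,y^*,\alpha)\big)\Big]$. *)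

From HB Require Import structures.
From mathcomp Require Import all_boot all_order all_algebra.
From mathcomp Require Import all_classical all_reals all_analysis.
Set Implicit Arguments. Unset Strict Implicit. Unset Printing Implicit Defensive.
Import Order.TTheory GRing.Theory Num.Theory.
Import numFieldTopology.Exports.
Local Open Scope classical_set_scope.
Local Open Scope ring_scope.

Section DCDuality.
Variables (R : realType) (X : tvsType R).

(* Topological dual X^star : continuous linear functionals, represented as
   functions X -> R; <x, x^star> := x^star x.  (X^star is the same for the original
   topology and for sigma(X,X^star).) *)
Definition dualsp : set (X -> R) :=
  [set phi | (forall (a : R) (x y : X), phi (a *: x + y) = a * phi x + phi y)
             /\ continuous phi].

(* W := X^star x X^star x R ; points are ((x^star, y^star), alpha). *)
Definition Wt := ((X -> R) * (X -> R) * R)%type.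
Definition Wset : set Wt := [set w | dualsp w.1.1 /\ dualsp w.1.2].
Definition Zset : set Wt := [set w | Wset w /\ 0 < w.2].

Definition coupling (x : X) (w : Wt) : \bar R :=
  if w.1.2 x < w.2 then (w.1.1 x)%:E else +oo%E.

(* c-conjugate; mathcomp's "-" on \bar R satisfies (+oo)-(+oo) = -oo and
   (-oo)-(-oo) = -oo, as required by the convention of the paper. *)
Definition cconj (h : X -> \bar R) (w : Wt) : \bar R :=
  ereal_sup [set (coupling x w - h x)%E | x in [set: X]].

(* difference of functions with the convention (+oo) - (+oo) = +oo
   (dual extended addition, +oo absorbing) *)
Definition fsub (f g : X -> \bar R) : X -> \bar R := fun x => (f x - g x)%dE.

Definition indic (A : set X) : X -> \bar R :=
  fun x => if `[< A x >] then 0%E else +oo%E.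

Definition fadd (f g : X -> \bar R) : X -> \bar R := fun x => (f x + g x)%dE.

Definition domX (f : X -> \bar R) : set X := [set x | (f x < +oo)%E].

Definition properf (f : X -> \bar R) : Prop :=
  (forall x, f x != -oo%E) /\ exists x, (f x < +oo)%E.

Definition convexf (f : X -> \bar R) : Prop :=
  forall (x y : X) (t : R), 0 < t < 1 ->
    (f (t *: x + (1 - t) *: y)%R <= t%:E * f x + (1 - t)%R%:E * f y)%E.

Definition epiW (phi : Wt -> \bar R) : set (Wt * R) :=
  [set p | Wset p.1 /\ (phi p.1 <= p.2%:E)%E].
Definition domW (phi : Wt -> \bar R) : set Wt :=
  [set w | Wset w /\ (phi w < +oo)%E].

Definition translate (E : set (Wt * R)) (e : Wt * R) : set (Wt * R) :=
  [set ((fun x => p.1.1.1 x - e.1.1.1 x, fun x => p.1.1.2 x - e.1.1.2 x), p.1.2 - e.1.2, p.2 - e.2)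
  | p in E].

Definition zerof : X -> R := fun _ => 0.

Definition Bset : set (Wt * R) :=
  [set p | p.1.1.1 = zerof /\ p.1.1.2 = zerof /\ 0 < p.1.2].

Definition negW (w : Wt) : Wt := ((fun x => - w.1.1 x, fun x => - w.1.2 x), w.2).

Variables (f g : X -> \bar R) (A : set X).

Definition objP : X -> \bar R := fadd (fsub f g) (indic A).

Definition vP : \bar R := ereal_inf [set objP x | x in [set: X]].

Definition phiF (w w' : Wt) : \bar R :=
  (cconj g w - cconj f ((fun x => (w.1.1 x - w'.1.1 x)%R, fun x => (- w'.1.2 x)%R), w'.2)
   - cconj (indic A) w')%E.

Definition vDF : \bar R :=
  ereal_sup [set ereal_inf [set phiF w w' | w in domW (cconj g)] | w' in Zset].

Definition vDbarF : \bar R :=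
  ereal_inf [set ereal_sup [set phiF w w' | w' in Zset] | w in domW (cconj g)].

Definition strong_DF : Prop :=
  vP = vDF /\
  exists2 w', domW (cconj (indic A)) w' &
    forall w, domW (cconj g) w -> (vDF <= phiF w w')%E.

Definition strong_DbarF : Prop :=
  vP = vDbarF /\
  forall w, domW (cconj g) w ->
    exists2 w', domW (cconj (indic A)) w' & (vDbarF <= phiF w w')%E.

Definition Lambda : set (Wt * R) :=
  \bigcap_(w in domW (cconj g))
    translate (epiW (cconj (fadd f (indic A))))
              ((w.1.1, zerof), 0, fine (cconj g w)).

Definition OKpiece (w' w : Wt) : set (Wt * R) :=
  translate (epiW (cconj (fsub f (fun x => coupling x (negW w')))))
            ((w.1.1, zerof), 0, fine (cconj g w) - fine (cconj (indic A) w')).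

Definition Omega : set (Wt * R) :=
  \bigcup_(w' in domW (cconj (indic A))) \bigcap_(w in domW (cconj g)) OKpiece w' w.

Definition Kset : set (Wt * R) :=
  \bigcap_(w in domW (cconj g)) \bigcup_(w' in domW (cconj (indic A))) OKpiece w' w.

End DCDuality.

From Pilot Require Import Defs.
From HB Require Import structures.
From mathcomp Require Import all_boot all_order all_algebra.
From mathcomp Require Import all_classical all_reals all_analysis.
From mathcomp Require Import lra.
Import Order.TTheory GRing.Theory Num.Theory.
Import numFieldTopology.Exports.
Local Open Scope classical_set_scope.
Local Open Scope ring_scope.
Set Implicit Arguments. Unset Strict Implicit. Unset Printing Implicit Defensive.

(* Points of B are (0, 0, beta, s) with beta > 0, and membership of such a point
   in the translated epigraphs defining Omega, K, Lambda and epi (f - g + delta_A)^c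
   reduces to the scalar inequalities -s <= phi(w; w'),
   -s <= g^c(w) - (f + delta_A)^c(u^*, 0, beta) and -s <= v(P) respectively.
   Thus Omega /\ B = K /\ B says that every "for all w, exists w'" lower bound
   for phi is attained by a single w', which is what turns strong duality for
   (D-bar^F) into strong duality for (D^F), given weak duality
   v(D^F) <= v(D-bar^F).  Conversely, phi(w; w') <= g^c(w) - (f + delta_A)^c(u^*, 0, 1),
   so the hypothesis epi (f - g + delta_A)^c /\ B = Lambda /\ B yields
   v(D-bar^F) <= v(P); under (i) all three values then coincide and the dual
   witness of (i) serves for (ii). *)

Lemma lee_EFin_shift (R : realDomainType) (F : \bar R) (s t : R) :
  (F <= (s + t)%:E)%E <-> ((- s)%:E <= t%:E - F)%E.
Proof.
case: F => [a||] /=; rewrite ?leey ?leNye ?leeNy_eq //.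
by rewrite -EFinB !lee_fin; split=> ?; lra.
Qed.

Lemma lee_of_EFin_lbounds (R : realDomainType) (a b : \bar R) :
  (forall r : R, r%:E <= a -> r%:E <= b)%E -> (a <= b)%E.
Proof.
case: a => [ra||] H; [exact: H | | exact: leNye].
case: b H => [rb||] H //; last by have := H 0 (leey _).
have := H (rb + 1) (leey _); rewrite lee_fin => ?; exfalso; lra.
Qed.

Lemma lee_oppeD (R : realDomainType) (a b : \bar R) : (- a - b <= - (a + b))%E.
Proof.
by case: a => [a||]; case: b => [b||] //=; rewrite ?lee_fin ?opprD ?leey ?leNye.
Qed.

Section CConjugate.
Variables (R : realType) (X : tvsType R).
Implicit Types (h : X -> \bar R) (w : Wt X) (u : X -> R).
Local Notation zero := (@zerof R X).

Lemma coupling_gtNy (x : X) w : (-oo < coupling x w)%E.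
Proof. by rewrite /coupling; case: ifP; rewrite ?ltNyr. Qed.

Lemma cconj_gtNy h w (x : X) : (h x < +oo)%E -> (-oo < cconj h w)%E.
Proof.
move=> hx; apply: (lt_le_trans _ (ereal_sup_ubound _)); last by exists x.
have := coupling_gtNy x w.
by case: (coupling x w) => [c||] //; case: (h x) hx => [a||] //=; rewrite ?ltNyr.
Qed.

Lemma cconj_fin_num h w (x : X) :
  (h x < +oo)%E -> (cconj h w < +oo)%E -> cconj h w \is a fin_num.
Proof.
by move=> /(cconj_gtNy w) hw1 hw2; rewrite fin_numE (gt_eqF hw1) (lt_eqF hw2).
Qed.

Lemma cconj_le_alpha h w1 w2 :
  w1.1 = w2.1 -> w1.2 <= w2.2 -> (cconj h w2 <= cconj h w1)%E.
Proof.
move=> e12 le12; apply: ge_ereal_sup => _ [x _ <-].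
apply: le_trans (ereal_sup_ubound _); last by exists x.
apply: leeB => //; rewrite /coupling e12.
case: ifP => lt2; case: ifP => lt1 //; rewrite ?leey //.
by move: lt2; rewrite (lt_le_trans lt1 le12).
Qed.

Lemma dualsp_zerof : dualsp zero.
Proof. by split; [move=> *; rewrite /zerof mulr0 addr0 | exact: cst_continuous]. Qed.

Lemma cconj_origin h (beta : R) : 0 < beta ->
  cconj h ((zero, zero), beta) = (- ereal_inf [set h x | x in [set: X]])%E.
Proof.
move=> beta_gt0; rewrite /ereal_inf oppeK /cconj image_comp.
by congr ereal_sup; apply: eq_imagel => x _; rewrite /coupling /zerof beta_gt0 sub0e.
Qed.

Definition bpt (beta s : R) : Wt X * R := ((zero, zero), beta, s).

Lemma Bset_bpt (beta s : R) : 0 < beta -> Bset (bpt beta s).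
Proof. by []. Qed.

Lemma translate_bpt (E : set (Wt X * R)) u (beta s t : R) :
  translate E ((u, zero), 0, t) (bpt beta s) <-> E ((u, zero), beta, s + t).
Proof.
split.
- case=> [[[[p1 p2] p3] p4]] Ep [e1 e2 e3 e4].
  suff [<- <- <- <-] : [/\ p1 = u, p2 = zero, p3 = beta & p4 = s + t] by [].
  split; last by rewrite -e4 subrK.
  - by apply/funext => x; have /eqP := congr1 (@^~ x) e1; rewrite subr_eq0 => /eqP.
  - by apply/funext => x; have := congr1 (@^~ x) e2; rewrite subr0.
  - by rewrite -e3 subr0.
- move=> Ep; exists ((u, zero), beta, s + t) => //.
  rewrite /bpt /= subr0 addrK; congr (_, _, _, _); apply/funext => x; exact: subrr.
Qed.

Lemma translate_epiW_bpt (phi : Wt X -> \bar R) u (beta s t : R) : dualsp u ->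
  translate (epiW phi) ((u, zero), 0, t) (bpt beta s) <->
  (phi ((u, zero), beta) <= (s + t)%:E)%E.
Proof.
move=> u_dual; rewrite translate_bpt; split; first by case.
by split=> //; split=> //; exact: dualsp_zerof.
Qed.

Definition shiftW u w' : Wt X := ((fun x => u x - w'.1.1 x, fun x => - w'.1.2 x), w'.2).

Lemma cconj_fsub_coupling (f : X -> \bar R) u (beta : R) w' : 0 < beta ->
  cconj (fsub f (fun x => coupling x (negW w'))) ((u, zero), beta) =
  cconj f (shiftW u w').
Proof.
move=> beta_gt0; rewrite /cconj; congr ereal_sup; apply: eq_imagel => x _.
rewrite /coupling /fsub /negW /= /zerof beta_gt0.
case: ifP => _; case: (f x) => [a||] //=.
by rewrite -!EFinD; congr EFin; lra.
Qed.

Lemma cconj_fadd_indic_le (f : X -> \bar R) (A : set X) u (beta : R) w' : 0 < beta ->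
  (cconj (fadd f (Defs.indic A)) ((u, zero), beta) <=
   cconj f (shiftW u w') + cconj (Defs.indic A) w')%E.
Proof.
move=> beta_gt0; apply: ge_ereal_sup => _ [x _ <-].
apply: le_trans (leeD (ereal_sup_ubound _) (ereal_sup_ubound _));
  [|by exists x|by exists x].
rewrite /coupling /fadd /Defs.indic /zerof /= beta_gt0.
case: asboolP => Ax; last by case: (f x) => [a||]; rewrite ?leNye.
case: ifP => _; case: ifP => _; case: (f x) => [a||] //=.
all: rewrite -?EFinD ?addye ?addey ?leey // lee_fin; lra.
Qed.

(* c-conjugates are antitone in alpha, so raising alpha to at least 1 moves a
   point of W into Z without decreasing phi. *)
Definition liftW w' : Wt X := (w'.1, Num.max w'.2 1).

Lemma Zset_liftW w' : Wset w' -> Zset (liftW w').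
Proof. by split=> //; rewrite lt_max ltr01 orbT. Qed.

Lemma cconj_liftW_le h w' : (cconj h (liftW w') <= cconj h w')%E.
Proof. by apply: cconj_le_alpha => //; rewrite le_max lexx. Qed.

Lemma domW_liftW h w' : domW (cconj h) w' -> domW (cconj h) (liftW w').
Proof.
by case=> /Zset_liftW [] ? _ ?; split=> //; exact: le_lt_trans (cconj_liftW_le _ _) _.
Qed.

End CConjugate.

Arguments bpt {R X}.

Section DualProblems.
Variables (R : realType) (X : tvsType R) (f g : X -> \bar R) (A : set X).
Implicit Types (w : Wt X) (beta r s : R).
Local Notation zero := (@zerof R X).
Local Notation B := (@Bset R X).
Local Notation phi := (phiF f g A).
Local Notation domg := (domW (cconj g)).
Local Notation domA := (domW (cconj (Defs.indic A))).

Lemma phiF_le_liftW w w' : (phi w w' <= phi w (liftW w'))%E.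
Proof. by do 2?apply: leeB => //; apply: cconj_le_alpha => //; rewrite le_max lexx. Qed.

Lemma phiF_le_sup_Zset w w' :
  Wset w' -> (phi w w' <= ereal_sup [set phi w v | v in @Zset R X])%E.
Proof.
move=> /Zset_liftW Zw'; apply: le_trans (phiF_le_liftW w w') _.
by apply: ereal_sup_ubound; exists (liftW w').
Qed.

Lemma phiF_le w w' beta : 0 < beta ->
  (phi w w' <= cconj g w - cconj (fadd f (Defs.indic A)) ((w.1.1, zero), beta))%E.
Proof.
move=> beta_gt0; rewrite /phiF -addeA leeD2l //.
apply: le_trans (lee_oppeD _ _) _; rewrite leeN2.
exact: (cconj_fadd_indic_le f A w.1.1 w' beta_gt0).
Qed.

Lemma vDF_le_vDbarF : (vDF f g A <= vDbarF f g A)%E.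
Proof.
apply: ge_ereal_sup => _ [w' Zw' <-]; apply: le_ereal_inf_tmp => _ [w Dw <-].
apply: le_trans (ereal_inf_lbound _) _; first by exists w.
by apply: ereal_sup_ubound; exists w'.
Qed.

Hypotheses (f_proper : properf f) (g_proper : properf g) (A_nonempty : A !=set0).

Lemma cconj_g_fin_num w : domg w -> cconj g w \is a fin_num.
Proof. by case=> _; case: g_proper => _ [x gx]; exact: cconj_fin_num gx. Qed.

Lemma cconj_indic_fin_num w' : domA w' -> cconj (Defs.indic A) w' \is a fin_num.
Proof.
case=> _; case: A_nonempty => a Aa; apply: (@cconj_fin_num _ _ _ _ a).
by rewrite /Defs.indic asboolT.
Qed.

Lemma phiF_shiftE w w' :
  phi w w' = (cconj g w - cconj f (shiftW w.1.1 w') - cconj (Defs.indic A) w')%E.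
Proof. by []. Qed.

Lemma domW_indic_origin : domA ((zero, zero), 1).
Proof.
split; first by split; exact: dualsp_zerof.
apply: (@le_lt_trans _ _ 0%E); last exact: ltry.
apply: ge_ereal_sup => _ [x _ <-]; rewrite /coupling /zerof ltr01 sub0e /Defs.indic.
by case: asboolP; rewrite ?oppe0 ?leNye.
Qed.

Lemma epiW_cconj_objP_bpt beta r : 0 < beta ->
  epiW (cconj (objP f g A)) (bpt beta (- r)) <-> (r%:E <= vP f g A)%E.
Proof.
move=> beta_gt0; rewrite /epiW /= cconj_origin // -/(vP f g A) leeNl EFinN oppeK.
by split=> [[]|] // ?; split=> //; split; exact: dualsp_zerof.
Qed.

Lemma Lambda_bpt beta r : 0 < beta ->
  Lambda f g A (bpt beta (- r)) <->
  forall w, domg w ->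
    (r%:E <= cconj g w - cconj (fadd f (Defs.indic A)) ((w.1.1, zero), beta))%E.
Proof.
move=> beta_gt0; split=> HL w Dw; have [[u_dual _] _] := Dw;
  have Gfin := cconj_g_fin_num Dw.
- by move: (HL w Dw); rewrite translate_epiW_bpt // lee_EFin_shift opprK fineK.
- by rewrite translate_epiW_bpt // lee_EFin_shift opprK fineK //; exact: HL.
Qed.

Lemma phiF_lt_pinfty w w' : domg w -> domA w' -> (phi w w' < +oo)%E.
Proof.
move=> /cconj_g_fin_num + /cconj_indic_fin_num; rewrite phiF_shiftE.
case: (cconj g w) => // G _; case: (cconj _ w') => // D _.
case: f_proper => _ [x fx]; have := cconj_gtNy (shiftW w.1.1 w') fx.
by case: (cconj f _) => [a||] //= _; rewrite -?EFinD ?ltry.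
Qed.

Lemma OKpiece_bpt w w' beta s : domg w -> domA w' -> 0 < beta ->
  OKpiece f g A w' w (bpt beta s) <-> ((- s)%:E <= phi w w')%E.
Proof.
move=> Dw Dw' beta_gt0; have [[u_dual _] _] := Dw.
rewrite /OKpiece translate_epiW_bpt // cconj_fsub_coupling // phiF_shiftE.
move: (cconj_g_fin_num Dw) (cconj_indic_fin_num Dw').
case: (cconj g w) => // G _; case: (cconj _ w') => // D _ /=.
by rewrite lee_EFin_shift addeAC EFinB.
Qed.

Lemma vDbarF_le_vP :
  epiW (cconj (objP f g A)) `&` B = Lambda f g A `&` B ->
  (vDbarF f g A <= vP f g A)%E.
Proof.
move=> epiE; apply: lee_of_EFin_lbounds => r r_le.
have : (Lambda f g A `&` B) (bpt 1 (- r)).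
  split; last exact: Bset_bpt.
  apply/(Lambda_bpt _ ltr01) => w Dw; apply: le_trans r_le _.
  apply: le_trans (ereal_inf_lbound _) _; first by exists w.
  by apply: ge_ereal_sup => _ [w' _ <-]; exact: phiF_le.
by rewrite -epiE => -[/(epiW_cconj_objP_bpt _ ltr01)].
Qed.

Lemma uniform_lb_of_Omega_eq_K :
  strong_DbarF f g A -> Omega f g A `&` B = Kset f g A `&` B ->
  exists2 w', domA w' & forall w, domg w -> (vDbarF f g A <= phi w w')%E.
Proof.
case=> _ sup_lb OKE; case vE: (vDbarF f g A) => [r||].
- have : (Kset f g A `&` B) (bpt 1 (- r)).
    split=> [w Dw|]; last exact: Bset_bpt.
    have [w' Dw' le_w'] := sup_lb w Dw; exists w' => //.
    by apply/OKpiece_bpt => //; rewrite opprK -vE.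
  rewrite -OKE => -[[w' Dw' Hw'] _]; exists w' => // w Dw.
  by have := (OKpiece_bpt _ Dw Dw' ltr01).1 (Hw' w Dw); rewrite opprK.
- exists ((zero, zero), 1) => [|w Dw]; first exact: domW_indic_origin.
  have [w' Dw'] := sup_lb w Dw.
  by rewrite vE leye_eq (lt_eqF (phiF_lt_pinfty Dw Dw')).
- by exists ((zero, zero), 1) => [|w _]; [exact: domW_indic_origin | exact: leNye].
Qed.

Lemma strong_DF_of_uniform_lb : vP f g A = vDbarF f g A ->
  (exists2 w', domA w' & forall w, domg w -> (vDbarF f g A <= phi w w')%E) ->
  strong_DF f g A.
Proof.
move=> vPE [w' Dw' lb].
have {}lb w : domg w -> (vDbarF f g A <= phi w (liftW w'))%E.
  by move=> Dw; exact: le_trans (lb w Dw) (phiF_le_liftW w w').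
have vDE : vDF f g A = vDbarF f g A.
  apply/le_anti; rewrite vDF_le_vDbarF /=.
  apply: le_trans (ereal_sup_ubound _); last first.
    by exists (liftW w'); first exact: Zset_liftW Dw'.1.
  by apply: le_ereal_inf_tmp => _ [w Dw <-]; exact: lb.
split; first by rewrite vPE vDE.
by exists (liftW w'); [exact: domW_liftW | rewrite vDE].
Qed.

Lemma vDF_eq_vDbarF_of_strong_DF :
  strong_DF f g A -> (vDbarF f g A <= vP f g A)%E -> vDF f g A = vDbarF f g A.
Proof. by case=> vPE _ le; apply/le_anti; rewrite vDF_le_vDbarF -vPE le. Qed.

Lemma strong_DbarF_of_strong_DF :
  strong_DF f g A -> (vDbarF f g A <= vP f g A)%E -> strong_DbarF f g A.
Proof.
move=> sD le; have vDE := vDF_eq_vDbarF_of_strong_DF sD le.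
case: sD => vPE [w0 Dw0 lb]; split=> [|w Dw]; first by rewrite vPE vDE.
by exists w0; rewrite // -vDE; exact: lb.
Qed.

Lemma Omega_eq_K_of_strong_DF :
  strong_DF f g A -> (vDbarF f g A <= vP f g A)%E ->
  Omega f g A `&` B = Kset f g A `&` B.
Proof.
move=> sD le; have vDE := vDF_eq_vDbarF_of_strong_DF sD le.
case: sD => _ [w0 Dw0 lb]; apply/seteqP; split=> [q [[w' Dw' Hq] Bq]|q [Kq Bq]].
  by split=> // w Dw; exists w'; last exact: Hq.
case: q Kq Bq => [[[q1 q2] beta] s] Kq [/= q1E [/= q2E beta_gt0]]; subst q1 q2.
have s_le : ((- s)%:E <= vDF f g A)%E.
  rewrite vDE; apply: le_ereal_inf_tmp => _ [w Dw <-].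
  have [w' Dw' /(OKpiece_bpt _ Dw Dw' beta_gt0) s_le] := Kq w Dw.
  exact: le_trans s_le (phiF_le_sup_Zset _ Dw'.1).
split=> //; exists w0 => // w Dw; apply/(OKpiece_bpt _ Dw Dw0 beta_gt0).
exact: le_trans s_le (lb w Dw).
Qed.

End DualProblems.

Theorem theorem5p5 (R : realType) (X : tvsType R)
  (f g : X -> \bar R) (A : set X) :
  hausdorff_space X ->
  (exists x : X, x != 0) ->
  properf f -> convexf f -> properf g -> convexf g ->
  domX f `<=` domX g ->
  A !=set0 ->
  (* (ii) => (i) holds without the extra hypothesis *)
  ((strong_DbarF f g A /\ Omega f g A `&` @Bset R X = Kset f g A `&` @Bset R X) ->
     strong_DF f g A) /\
  (* under the hypothesis, (i) <=> (ii) *)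
  (epiW (cconj (objP f g A)) `&` @Bset R X = Lambda f g A `&` @Bset R X ->
   (strong_DF f g A <->
    (strong_DbarF f g A /\ Omega f g A `&` @Bset R X = Kset f g A `&` @Bset R X))).
Proof.
move=> _ _ f_proper _ g_proper _ _ A_nonempty.
have ii_i : strong_DbarF f g A /\ Omega f g A `&` @Bset R X = Kset f g A `&` @Bset R X ->
    strong_DF f g A.
  case=> sDbar OKE; apply: strong_DF_of_uniform_lb; first by case: sDbar.
  exact: uniform_lb_of_Omega_eq_K.
split=> // epiE; split=> // sD; have le := vDbarF_le_vP g_proper epiE.
split; first exact: strong_DbarF_of_strong_DF.
exact: Omega_eq_K_of_strong_DF.
Qed.
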